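(* Let $m$ and $n$ be non-negative integers and let $G$ be a soluble group having exactly $m$ subgroups that are not nilpotent of class at most $n$. If $d$ is the derived length of $G$, then $d \leq [\log_2(n)]+m+1$.
   Context: $[x]$ denotes the integer part of $x$. A subgroup is ''not nilpotent of class at most $n$'' if it is either non-nilpotent or nilpotent of class greater than $n$. *)

(* Groups here are ARBITRARY (possibly infinite) groups, given by a carrier
   type with multiplication, inverse and identity satisfying the group axioms.
   Subsets/subgroups are predicates T -> Prop, compared extensionally. *)
From mathcomp Require Import all_boot.

Set Implicit Arguments.
Unset Strict Implicit.
Unset Printing Implicit Defensive.

Section GroupDefs.
Variables (T : Type) (mul : T -> T -> T) (inv : T -> T) (one : T).

Definition is_group : Prop :=
  [/\ forall x y z, mul x (mul y z) = mul (mul x y) z,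
      forall x, mul one x = x,
      forall x, mul x one = x,
      forall x, mul (inv x) x = one
    & forall x, mul x (inv x) = one].

Definition is_subgroup (H : T -> Prop) : Prop :=
  [/\ H one,
      forall x y, H x -> H y -> H (mul x y)
    & forall x, H x -> H (inv x)].

Definition gen (A : T -> Prop) : T -> Prop :=
  fun x => forall S, is_subgroup S -> (forall a, A a -> S a) -> S x.

Definition commg (x y : T) : T := mul (mul (inv x) (inv y)) (mul x y).

Definition comm_sub (A B : T -> Prop) : T -> Prop :=
  gen (fun z => exists a b, A a /\ B b /\ z = commg a b).

(* lower central series: lcs H 0 = H = gamma_1(H), lcs H k = gamma_{k+1}(H) *)
Fixpoint lcs (H : T -> Prop) (k : nat) : T -> Prop :=
  match k with
  | 0 => H
  | k'.+1 => comm_sub (lcs H k') H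
  end.

Fixpoint der (H : T -> Prop) (k : nat) : T -> Prop :=
  match k with
  | 0 => H
  | k'.+1 => let D := der H k' in comm_sub D D
  end.

Definition trivial_set (A : T -> Prop) : Prop := forall x, A x -> x = one.

Definition nilpotent_class_le (H : T -> Prop) (n : nat) : Prop :=
  trivial_set (lcs H n).

Definition whole : T -> Prop := fun _ => True.

Definition soluble : Prop := exists d, trivial_set (der whole d).

Definition derived_length (d : nat) : Prop :=
  trivial_set (der whole d) /\
  forall k, trivial_set (der whole k) -> d <= k.

Definition set_eq (A B : T -> Prop) : Prop := forall x, A x <-> B x.

(* the group has exactly m subgroups satisfying P (subgroups counted as
   subsets, i.e. up to extensional equality) *)
Definition exactly_subgroups (P : (T -> Prop) -> Prop) (m : nat) : Prop :=
  exists s : seq (T -> Prop),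
    [/\ size s = m,
        forall i, i < m -> is_subgroup (nth (fun _ => False) s i)
                          /\ P (nth (fun _ => False) s i),
        forall i j, i < j -> j < m ->
          ~ set_eq (nth (fun _ => False) s i) (nth (fun _ => False) s j)
      & forall H, is_subgroup H -> P H ->
          exists2 i, i < m & set_eq H (nth (fun _ => False) s i)].

Definition not_nil_class_le (n : nat) (H : T -> Prop) : Prop :=
  ~ nilpotent_class_le H n.

End GroupDefs.

(* The derived and lower central series interlock: by the three subgroup lemma
   [gamma_i, gamma_j] <= gamma_{i+j}, hence G^(k) <= gamma_{2^k}(G).  So if
   2^(r+1) > n, i.e. r = [log_2 n], then every term G^(j) with j + r + 1 < d
   is not nilpotent of class at most n (otherwise G^(j+r+1) = 1).  These d - r - 1
   terms are pairwise distinct because d is the derived length, so d - r - 1 <= m. *)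
From Pilot Require Import Defs.
From mathcomp Require Import all_boot zify.
From Stdlib Require Import FunctionalExtensionality PropExtensionality ClassicalEpsilon.

Set Implicit Arguments.
Unset Strict Implicit.
Unset Printing Implicit Defensive.

Section Groups.
Variables (T : Type) (mul : T -> T -> T) (inv : T -> T) (one : T).
Hypothesis group_T : is_group mul inv one.

Local Notation cm := (Defs.commg mul inv).
Local Notation subg := (is_subgroup mul inv one).
Local Notation gn := (gen mul inv one).
Local Notation cs := (comm_sub mul inv one).
Local Notation der := (der mul inv one).
Local Notation lcs := (lcs mul inv one).

Lemma mulA x y z : mul x (mul y z) = mul (mul x y) z. Proof. by case: group_T. Qed.
Lemma mul1g x : mul one x = x. Proof. by case: group_T. Qed.
Lemma mulg1 x : mul x one = x. Proof. by case: group_T. Qed.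
Lemma mulVg x : mul (inv x) x = one. Proof. by case: group_T. Qed.
Lemma mulgV x : mul x (inv x) = one. Proof. by case: group_T. Qed.
Lemma mulKg x y : mul (inv x) (mul x y) = y. Proof. by rewrite mulA mulVg mul1g. Qed.
Lemma mulKVg x y : mul x (mul (inv x) y) = y. Proof. by rewrite mulA mulgV mul1g. Qed.

Lemma mulg_eq1_inv x y : mul x y = one -> x = inv y.
Proof. by move=> xy1; rewrite -[x]mulg1 -(mulgV y) mulA xy1 mul1g. Qed.

Lemma invgK x : inv (inv x) = x.
Proof. by symmetry; apply: mulg_eq1_inv; rewrite mulgV. Qed.

Lemma invMg x y : inv (mul x y) = mul (inv y) (inv x).
Proof. by symmetry; apply: mulg_eq1_inv; rewrite -mulA mulKg mulVg. Qed.

Lemma invg1 : inv one = one.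
Proof. by symmetry; apply: mulg_eq1_inv; rewrite mul1g. Qed.

Definition conjg (x g : T) := mul (inv g) (mul x g).

(* Normalizes a word in the free group on the occurring letters, closing
   identities that hold in every group. *)
Local Ltac gsimp := rewrite /Defs.commg /conjg;
  repeat progress rewrite ?invMg ?invgK ?invg1 ?mul1g ?mulg1 -?mulA ?mulKg ?mulKVg ?mulVg ?mulgV.

Lemma conjMg x y g : conjg (mul x y) g = mul (conjg x g) (conjg y g). Proof. by gsimp. Qed.
Lemma conjVg x g : conjg (inv x) g = inv (conjg x g). Proof. by gsimp. Qed.
Lemma conj1g g : conjg one g = one. Proof. by gsimp. Qed.
Lemma conjRg x y g : conjg (cm x y) g = cm (conjg x g) (conjg y g). Proof. by gsimp. Qed.
Lemma invRg x y : inv (cm x y) = cm y x. Proof. by gsimp. Qed.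

Lemma hall_witt x y z :
  mul (conjg (cm (cm x y) z) (inv y))
   (mul (conjg (cm (cm (inv y) (inv z)) x) z)
        (conjg (cm (cm z (inv x)) (inv y)) x)) = one.
Proof. by gsimp. Qed.

Definition subset (A B : T -> Prop) := forall x, A x -> B x.

Definition normalized (K N : T -> Prop) := forall x g, N x -> K g -> N (conjg x g).

Lemma subset_refl A : subset A A. Proof. by []. Qed.

Lemma gen_subgroup A : subg (gn A).
Proof.
split.
- by move=> S [S1 _ _].
- move=> x y Ax Ay S subgS AS; case: (subgS) => _ mulS _.
  by apply: mulS; [apply: Ax | apply: Ay].
- by move=> x Ax S subgS AS; case: (subgS) => _ _ invS; apply: invS; apply: Ax.
Qed.

Lemma mem_gen A a : A a -> gn A a.
Proof. by move=> Aa S _ AS; apply: AS. Qed.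

Lemma gen_subset A S : subg S -> subset A S -> subset (gn A) S.
Proof. by move=> subgS AS x; apply. Qed.

Lemma mem_commg A B a b : A a -> B b -> cs A B (cm a b).
Proof. by move=> Aa Bb; apply: mem_gen; exists a, b. Qed.

Lemma comm_sub_ind A B S : subg S ->
  (forall a b, A a -> B b -> S (cm a b)) -> subset (cs A B) S.
Proof. by move=> subgS AB_S; apply: gen_subset => // _ [a [b [Aa [Bb ->]]]]; apply: AB_S. Qed.

Lemma comm_subS A A' B B' : subset A A' -> subset B B' -> subset (cs A B) (cs A' B').
Proof.
move=> AA' BB'; apply: comm_sub_ind; first exact: gen_subgroup.
by move=> a b Aa Bb; apply: mem_commg; [apply: AA' | apply: BB'].
Qed.

Lemma comm_subC A B : subset (cs A B) (cs B A).
Proof.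
apply: comm_sub_ind; first exact: gen_subgroup.
move=> a b Aa Bb; rewrite -[cm a b]invgK invRg.
by case: (gen_subgroup (fun z => exists b a, B b /\ A a /\ z = cm b a)) => _ _; apply; apply: mem_commg.
Qed.

Lemma comm_sub_subset K A B : subg K -> subset A K -> subset B K -> subset (cs A B) K.
Proof.
move=> subgK AK BK; apply: comm_sub_ind => // a b Aa Bb.
case: subgK => _ mulK invK; rewrite /Defs.commg.
by apply: (mulK); apply: (mulK); try apply: (invK); [apply: AK | apply: BK | apply: AK | apply: BK].
Qed.

Lemma comm_sub_normalized K A B :
  normalized K A -> normalized K B -> normalized K (cs A B).
Proof.
move=> nA nB x g ABx Kg.
case: (gen_subgroup (fun z => exists a b, A a /\ B b /\ z = cm a b)) => AB1 mulAB invAB.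
pose P y := forall g, K g -> cs A B (conjg y g).
suff: subset (cs A B) P by move/(_ x ABx g Kg).
apply: comm_sub_ind => [|a b Aa Bb h Kh]; last first.
  by rewrite conjRg; apply: mem_commg; [apply: nA | apply: nB].
split=> [h _ | y z Py Pz h Kh | y Py h Kh].
- by rewrite conj1g.
- by rewrite conjMg; apply: mulAB; [apply: Py | apply: Pz].
- by rewrite conjVg; apply: invAB; apply: Py.
Qed.

Section LowerCentralSeries.
Variable K : T -> Prop.
Hypothesis subgK : subg K.

Lemma normalized_self : normalized K K.
Proof. by case: subgK => _ mulK invK x g Kx Kg; apply: (mulK); [apply: (invK) | apply: (mulK)]. Qed.

Lemma lcs_subgroup_normalized k :
  [/\ subg (lcs K k), subset (lcs K k) K & normalized K (lcs K k)].
Proof.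
elim: k => [|k [subg_k sub_k norm_k]] /=; first by split=> //; apply: normalized_self.
split; first exact: gen_subgroup.
- exact: comm_sub_subset.
- by apply: comm_sub_normalized => //; apply: normalized_self.
Qed.

Lemma lcs_succ_subset k : subset (lcs K k.+1) (lcs K k).
Proof.
case: (lcs_subgroup_normalized k) => subg_k _ norm_k /=.
apply: comm_sub_ind => // a b La Kb.
have -> : cm a b = mul (inv a) (conjg a b) by gsimp.
by case: subg_k => _ mulL invL; apply: mulL; [apply: invL | apply: norm_k].
Qed.

Lemma lcs_subset i j : i <= j -> subset (lcs K j) (lcs K i).
Proof.
move/subnK <-; elim: (j - i) => [|t IH] x; first by [].
by rewrite addSn => /lcs_succ_subset /IH.
Qed.

Lemma three_subgroup_elem X Y Z N :
  subset X K -> subset Y K -> subset Z K -> subg X -> subg Y -> subg Z ->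
  subg N -> normalized K N ->
  (forall x y z, X x -> Y y -> Z z -> N (cm (cm y z) x)) ->
  (forall x y z, X x -> Y y -> Z z -> N (cm (cm z x) y)) ->
  forall x y z, X x -> Y y -> Z z -> N (cm (cm x y) z).
Proof.
move=> XK YK ZK [_ _ invX] [_ _ invY] [_ _ invZ] [_ mulN invN] nN YZX ZXY x y z Xx Yy Zz.
have := hall_witt x y z.
set A := cm (cm x y) z; set B := conjg _ z; set C := conjg _ x.
have NB : N B by apply: nN; [apply: YZX; auto | auto].
have NC : N C by apply: nN; [apply: ZXY; auto | auto].
move=> /mulg_eq1_inv ABC; clearbody A.
have -> : A = conjg (conjg A (inv y)) y by gsimp.
by rewrite ABC; apply: nN; [apply: invN; apply: mulN | auto].
Qed.

Lemma three_subgroup X Y Z N :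
  subset X K -> subset Y K -> subset Z K -> subg X -> subg Y -> subg Z ->
  subg N -> normalized K N ->
  subset (cs (cs Y Z) X) N -> subset (cs (cs Z X) Y) N -> subset (cs (cs X Y) Z) N.
Proof.
move=> XK YK ZK subgX subgY subgZ subgN nN YZX ZXY.
have XYZ : forall x y z, X x -> Y y -> Z z -> N (cm (cm x y) z).
  apply: three_subgroup_elem => // x y z Xx Yy Zz.
  - by apply: YZX; apply: mem_commg => //; apply: mem_commg.
  - by apply: ZXY; apply: mem_commg => //; apply: mem_commg.
case: (subgN) => N1 mulN invN; case: (subgK) => K1 mulK invK.
pose P w := K w /\ forall z, Z z -> N (cm w z).
have subgP : subg P.
  split=> [|a b [Ka Pa] [Kb Pb] | a [Ka Pa]].
  - by split=> // z _; have -> : cm one z = one by gsimp.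
  - split=> [|z Zz]; first exact: mulK.
    have -> : cm (mul a b) z = mul (conjg (cm a z) b) (cm b z) by gsimp.
    by apply: mulN; [apply: nN => //; apply: Pa | apply: Pb].
  - split=> [|z Zz]; first exact: invK.
    have -> : cm (inv a) z = inv (conjg (cm a z) (inv a)) by gsimp.
    by apply: invN; apply: nN; [apply: Pa | apply: invK].
have XY_P : subset (cs X Y) P.
  apply: comm_sub_ind => // a b Xa Yb; split=> [|z Zz]; last exact: XYZ.
  exact: (comm_sub_subset subgK XK YK (mem_commg Xa Yb)).
by apply: comm_sub_ind => // w z /XY_P [_]; apply.
Qed.

Lemma comm_lcs_subset i j : subset (cs (lcs K i) (lcs K j)) (lcs K (i + j).+1).
Proof.
elim: j i => [|j IH] i; first by rewrite addn0.
suff ji : subset (cs (lcs K j.+1) (lcs K i)) (lcs K (i + j).+2).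
  by rewrite addnS => x /comm_subC /ji.
case: (lcs_subgroup_normalized j) => subg_j sub_j _.
case: (lcs_subgroup_normalized i) => subg_i sub_i _.
case: (lcs_subgroup_normalized (i + j).+2) => subg_N _ norm_N.
apply: (three_subgroup sub_j (@subset_refl K) sub_i subg_j subgK subg_i subg_N norm_N).
- move=> x /(comm_subS (@comm_subC K (lcs K i)) (@subset_refl (lcs K j))).
  by move=> /(IH i.+1); rewrite addSn.
- exact: comm_subS (IH i) (@subset_refl K).
Qed.

Lemma der_subset_lcs k : subset (der K k) (lcs K (2 ^ k).-1).
Proof.
elim: k => [|k IH] //= x /(comm_subS IH IH) /comm_lcs_subset.
suff -> : ((2 ^ k).-1 + (2 ^ k).-1).+1 = (2 ^ k.+1).-1 by [].
by have := expn_gt0 2 k; rewrite expnS; move: (2 ^ k) => p; lia.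
Qed.

Lemma nil_class_le_der_trivial n k :
  nilpotent_class_le mul inv one K n -> n < 2 ^ k -> trivial_set one (der K k).
Proof.
move=> nilK n_lt x /der_subset_lcs Lx; apply: nilK.
by apply: lcs_subset Lx; rewrite -ltnS prednK ?expn_gt0.
Qed.

End LowerCentralSeries.

Lemma der_subgroup K k : subg K -> subg (der K k).
Proof. by case: k => [|k] //= _; apply: gen_subgroup. Qed.

Lemma derD K j k : der (der K j) k = der K (j + k).
Proof. by elim: k => [|k IH] /=; rewrite ?addn0 ?addnS /= ?IH. Qed.

Lemma set_eq_eq (A B : T -> Prop) : set_eq A B -> A = B.
Proof.
by move=> AB; apply: functional_extensionality => x; apply: propositional_extensionality.
Qed.

Section DerivedLength.
Variable d : nat.
Hypothesis der_len : derived_length mul inv one d.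

Local Notation D j := (der (@whole T) j).

Lemma der_whole_subgroup j : subg (D j).
Proof. exact: der_subgroup. Qed.

Lemma der_not_nil_class_le n j :
  j + (trunc_log 2 n).+1 < d -> not_nil_class_le mul inv one n (D j).
Proof.
case: der_len => _ min_d j_lt nilD.
have /min_d : trivial_set one (D (j + (trunc_log 2 n).+1)).
  rewrite -derD; apply: (nil_class_le_der_trivial (der_whole_subgroup j) nilD).
  exact: trunc_log_ltn.
by lia.
Qed.

Lemma der_neq i j : i < j -> j <= d -> ~ set_eq (D i) (D j).
Proof.
case: der_len => trivD min_d ij jd /set_eq_eq Dij.
have /min_d : trivial_set one (D (i + (d - j))) by rewrite -derD Dij derD subnKC.
by lia.
Qed.

End DerivedLength.

Lemma exactly_subgroups_count (P : (T -> Prop) -> Prop) m a (F : nat -> T -> Prop) :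
  exactly_subgroups mul inv one P m ->
  (forall j, j < a -> subg (F j) /\ P (F j)) ->
  (forall i j, i < j -> j < a -> ~ set_eq (F i) (F j)) ->
  a <= m.
Proof.
move=> [s [_ _ _ s_all]] PF F_neq.
have idx (j : 'I_a) : {i : 'I_m | set_eq (F j) (nth (fun _ => False) s i)}.
  apply: constructive_indefinite_description.
  have [subgF PF'] := PF _ (ltn_ord j).
  by have [i lt_im eq_i] := s_all _ subgF PF'; exists (Ordinal lt_im).
pose f j := sval (idx j).
suff /leq_card : injective f by rewrite !card_ord.
move=> j1 j2 f12; apply: val_inj; apply/eqP; apply: contraT => j12.
have e1 := svalP (idx j1); have e2 := svalP (idx j2).
rewrite -/(f j1) -/(f j2) f12 in e1 e2.
have F12 : set_eq (F j1) (F j2) by move=> x; split=> [/e1 /e2 | /e2 /e1].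
case: (ltngtP j1 j2) j12 => // [lt12 | lt21] _.
- by case: (F_neq _ _ lt12 (ltn_ord j2) F12).
- by case: (F_neq _ _ lt21 (ltn_ord j1)) => x; split => /F12.
Qed.

End Groups.

Theorem theoremB (m n : nat) (T : Type) (mul : T -> T -> T) (inv : T -> T)
    (one : T) (d : nat) :
  is_group mul inv one ->
  soluble mul inv one ->
  exactly_subgroups mul inv one (not_nil_class_le mul inv one n) m ->
  derived_length mul inv one d ->
  d <= trunc_log 2 n + m + 1.
Proof.
move=> group_T _ exact_m der_len.
set r := trunc_log 2 n.
case: (leqP d (r + 1)) => [|lt_r1_d]; first by lia.
suff : d - r.+1 <= m by lia.
apply: (exactly_subgroups_count exact_m (F := der mul inv one (@whole T))).
- move=> j lt_j; split; first exact: der_whole_subgroup.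
  by apply: (der_not_nil_class_le group_T der_len); lia.
- by move=> i j ij lt_j; apply: (der_neq der_len ij); lia.
Qed.
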